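(* Let $G$ be a finite abelian group and $q:G\to\mathbb Q/\mathbb Z$ a nondegenerate quadratic function. For any subgroup $A\subset G$, with $A^{\perp}=\{x\in G\mid b_q(x,A)=0\}$, $$\gamma(A,q|_A)=\gamma(G,q)\,\overline{\gamma(A^{\perp},q|_{A^{\perp}})},$$ where the bar denotes complex conjugation.
   Context: A quadratic function on a finite abelian group $G$ is a map $q:G\to\mathbb Q/\mathbb Z$ such that $b_q(x,y)=q(x+y)-q(x)-q(y)$ is $\mathbb Z$-bilinear. For a subgroup $H\subset G$, $H^{\perp}=\{x\in G\mid b_q(x,H)=0\}$; $q$ is nondegenerate if $G^{\perp}=0$. The normalized Gauss sum is $\gamma(G,q)=|G|^{-1/2}|G^{\perp}|^{-1/2}\sum_{x\in G}e^{2\pi i q(x)}$, where $|\cdot|$ denotes cardinality. For a restriction $q|_A$, the Gauss sum $\gamma(A,q|_A)$ is computed with $A$ in place of $G$ and $q|_A$ in place of $q$ (so the annihilator is taken inside $A$ with respect to $b_{q|_A}$). *)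

From mathcomp Require Import all_boot all_order all_algebra.
From mathcomp Require Import all_classical all_reals all_analysis.
From mathcomp Require Import complex.
Set Implicit Arguments. Unset Strict Implicit. Unset Printing Implicit Defensive.
Import Order.TTheory GRing.Theory Num.Theory.
Local Open Scope ring_scope.
Local Open Scope complex_scope.

(* A value of Q/Z is represented by a rational representative; two
   representatives are the same element of Q/Z iff their difference is an
   integer.  "r = 0 in Q/Z" is written [zeroQZ r]. *)
Definition zeroQZ (r : rat) : bool := r \is a Num.int.

Section QuadFun.
Variable G : finZmodType.

Definition bq (q : G -> rat) (x y : G) : rat := q (x + y) - q x - q y.

(* b_q is Z-bilinear as a map G x G -> Q/Z (biadditivity = Z-bilinearity) *)
Definition quadratic_fun (q : G -> rat) : Prop :=
  forall x y z : G,
    zeroQZ (bq q (x + y) z - bq q x z - bq q y z) /\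
    zeroQZ (bq q x (y + z) - bq q x y - bq q x z).

Definition is_subgroup (A : {set G}) : bool :=
  (0 \in A) && [forall x in A, forall y in A, x - y \in A].

Definition annih (q : G -> rat) (H : {set G}) : {set G} :=
  [set x | [forall h in H, zeroQZ (bq q x h)]].

(* annihilator of A inside A, w.r.t. b_{q|_A} *)
Definition annih_in (q : G -> rat) (A : {set G}) : {set G} := A :&: annih q A.

Definition nondegenerate_qf (q : G -> rat) : Prop := annih q [set: G] = [set 0].

Definition expi (R : realType) (r : rat) : R[i] :=
  (cos (2 * pi * ratr r) +i* sin (2 * pi * ratr r))%C.

Definition gauss (R : realType) (q : G -> rat) (A : {set G}) : R[i] :=
  ((Num.sqrt (#|A|%:R : R))^-1)%:C * ((Num.sqrt (#|annih_in q A|%:R : R))^-1)%:C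
  * \sum_(x in A) expi R (q x).

End QuadFun.

From mathcomp Require Import all_boot all_order all_algebra.
From mathcomp Require Import all_classical all_reals all_analysis.
From mathcomp Require Import complex.
From mathcomp Require Import ring lra.
From mathcomp Require Rstruct.
Import (canonicals) Rstruct.
Set Implicit Arguments. Unset Strict Implicit. Unset Printing Implicit Defensive.
Import Order.TTheory GRing.Theory Num.Theory.
Local Open Scope ring_scope.

(* Everything rests on the orthogonality relation
   \sum_(y in H) e(b(x, y)) = #|H| [x \in H^perp] for a subgroup H, which holds
   because b(x, -) is a character of H and e(r) = 1 exactly when r is an
   integer.  Read twice, it gives #|A| #|A^perp| = #|G| and hence
   A^perp^perp = A.  Expanding the product of the Gauss sum of G with the
   conjugate of that of A^perp by x = z + y turns q x - q y into
   q z + b(z, y), so orthogonality leaves #|A^perp| times the Gauss sum of A.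
   The normalising factors then agree since A and A^perp have the same
   radical A :&: A^perp, while that of G is trivial. *)

Section Expi.
Variable R : realType.
Local Notation e := (expi R).

Lemma expiD r s : e (r + s) = e r * e s.
Proof.
rewrite /expi rmorphD /= mulrDr cosD sinD.
by apply/eqP; rewrite eq_complex /=; apply/andP; split; apply/eqP; ring.
Qed.

Lemma expi0 : e 0 = 1.
Proof. by rewrite /expi rmorph0 mulr0 cos0 sin0. Qed.

Lemma expiNr r : e (- r) * e r = 1.
Proof. by rewrite -expiD addNr expi0. Qed.

Lemma conj_expi r : Num.conj (e r) = e (- r).
Proof. by rewrite /expi rmorphN /= mulrN cosN sinN. Qed.

Lemma conj_real_complex (x : R) : Num.conj x%:C%C = x%:C%C.
Proof. exact: conjc_real. Qed.

Lemma expi_int r : r \is a Num.int -> e r = 1.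
Proof.
have expi_nat n : e n%:R = 1.
  elim: n => [|n IHn]; first exact: expi0.
  rewrite -natr1 expiD IHn mul1r /expi rmorph1 mulr1 mulrC mulr_natr.
  by rewrite cos2pi sin2pi.
move=> /intrP [[n|n] ->]; first by rewrite -pmulrn expi_nat.
by rewrite NegzE mulrNz -pmulrn -(expiNr n.+1%:R) expi_nat mulr1.
Qed.

Lemma expi_eq1_half t : 0 <= t <= 1/2 -> e t = 1 -> t = 0.
Proof.
move=> /andP [t_ge0 t_le] [cos_eq1 _].
have u_ge0 : 0 <= ratr t :> R by rewrite ler0q.
have u_le : ratr t <= 1/2 :> R.
  by rewrite -(ler_rat R) fmorph_div /= rmorph1 rmorph_nat in t_le.
have pi_gt0 := @pi_gt0 R.
have : 2 * pi * ratr t = 0 :> R.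
  by apply: cos_inj; rewrite ?cos0 // !in_itv /=; apply/andP; split; nra.
by move=> /eqP; rewrite mulf_eq0 fmorph_eq0 mulf_eq0 (gt_eqF pi_gt0) pnatr_eq0 => /eqP.
Qed.
Lemma expi_eq1 r : (e r == 1) = (r \is a Num.int).
Proof.
apply/eqP/idP => [er1|/expi_int //].
set n := Num.floor r; set t := r - n%:~R.
have et1 : e t = 1 by rewrite expiD er1 mul1r expi_int // rpredN intr_int.
have eNt1 : e (- t) = 1 by rewrite -[e _]mulr1 -et1 expiNr.
have /andP [n_le n_gt] := floor_itv r; rewrite -/n intrD in n_le n_gt.
have t_ge0 : 0 <= t by rewrite subr_ge0.
have t_lt1 : t < 1 by rewrite ltrBlDl.
have [t_le|t_gt] := leP t (1/2).
  have t0 : t = 0 by apply: expi_eq1_half; rewrite ?t_ge0.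
  by rewrite -[r](subrK n%:~R) -/t t0 add0r intr_int.
suff : 1 - t = 0 by move/eqP; rewrite subr_eq0 => /eqP t1; rewrite t1 ltxx in t_lt1.
apply: expi_eq1_half; last by rewrite expiD eNt1 mulr1 expi_int ?rpred1.
by apply/andP; split; lra.
Qed.
End Expi.

Section Subgroup.
Variable G : finZmodType.
Implicit Types (H : {set G}) (x y : G).

Lemma subgroup0 H : is_subgroup H -> 0 \in H.
Proof. by case/andP. Qed.

Lemma subgroupB H x y : is_subgroup H -> x \in H -> y \in H -> x - y \in H.
Proof. by case/andP => _ /forall_inP clB xH yH; have /forall_inP := clB x xH; apply. Qed.

Lemma subgroupN H y : is_subgroup H -> y \in H -> - y \in H.
Proof. by move=> sgH yH; rewrite -sub0r subgroupB ?subgroup0. Qed.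

Lemma subgroupD H x y : is_subgroup H -> x \in H -> y \in H -> x + y \in H.
Proof. by move=> sgH xH yH; rewrite -[y]opprK subgroupB ?subgroupN. Qed.

Lemma subgroupT : is_subgroup [set: G].
Proof. by apply/andP; split; last (apply/forall_inP => x _; apply/forall_inP => y _); rewrite inE. Qed.

Lemma subgroup_card_gt0 H : is_subgroup H -> (0 < #|H|)%N.
Proof. by move=> sgH; apply/card_gt0P; exists 0; apply: subgroup0. Qed.

End Subgroup.

Section CharacterSum.
Variables (R : realType) (G : finZmodType).

(* Translating by h0 permutes H and multiplies the sum by [expi (f h0)]. *)
Lemma sum_expi_subgroup (H : {set G}) (f : G -> rat) : is_subgroup H ->
  {in H &, forall x y, zeroQZ (f (x + y) - f x - f y)} ->
  \sum_(h in H) expi R (f h) =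
    if [forall h in H, zeroQZ (f h)] then #|H|%:R else 0.
Proof.
move=> sgH f_add; case: ifP => [/forall_inP f0 | /negbT].
  rewrite (eq_bigr (fun=> 1)) ?sumr_const // => h /f0.
  exact: expi_int.
rewrite negb_forall_in => /existsP [h0 /andP [h0H f_h0]].
set S := \sum_(h in H) _.
have S_shift : S = S * expi R (f h0).
  rewrite {1}/S (reindex_inj (addIr h0)) mulr_suml /=.
  apply: eq_big => [h | h hH].
    by apply/idP/idP => hH; [rewrite -(addrK h0 h) subgroupB | rewrite subgroupD].
  have hH' : h \in H by rewrite -(addrK h0 h) subgroupB.
  have -> : f (h + h0) = (f (h + h0) - f h - f h0) + (f h + f h0) by ring.
  by rewrite expiD expi_int ?mul1r ?expiD //; apply: f_add.
have : S * (1 - expi R (f h0)) = 0 by rewrite mulrBr mulr1 -S_shift subrr.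
move/eqP; rewrite mulf_eq0 subr_eq0 [1 == _]eq_sym expi_eq1.
by case/orP => [/eqP // | f_h0_int]; case/negP: f_h0.
Qed.

End CharacterSum.

Section Annihilator.
Variables (G : finZmodType) (q : G -> rat).
Hypothesis hq : quadratic_fun q.
Implicit Types (A B : {set G}) (x y z : G).

Lemma bqC x y : bq q x y = bq q y x.
Proof. by rewrite /bq [y + x]addrC addrAC. Qed.

Lemma bqDl x y z : zeroQZ (bq q (x + y) z - bq q x z - bq q y z).
Proof. exact: (hq x y z).1. Qed.

Lemma bqDr x y z : zeroQZ (bq q x (y + z) - bq q x y - bq q x z).
Proof. exact: (hq x y z).2. Qed.

Lemma annih_subgroup B : is_subgroup (annih q B).
Proof.
apply/andP; split.
  rewrite inE; apply/forall_inP => h _.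
  have -> : bq q 0 h = - (bq q (0 + 0) h - bq q 0 h - bq q 0 h) by rewrite add0r; ring.
  by rewrite /zeroQZ rpredN; apply: bqDl.
apply/forall_inP => x; rewrite inE => /forall_inP bx0.
apply/forall_inP => y; rewrite inE => /forall_inP by0.
rewrite inE; apply/forall_inP => h hB.
have -> : bq q (x - y) h =
    bq q x h - bq q y h - (bq q (x - y + y) h - bq q (x - y) h - bq q y h).
  by rewrite subrK; ring.
by apply: rpredB; [apply: rpredB; [apply: bx0 | apply: by0] | apply: bqDl].
Qed.

Lemma sub_annihK B : B \subset annih q (annih q B).
Proof.
apply/fintype.subsetP => b bB; rewrite inE; apply/forall_inP => x.
by rewrite inE bqC => /forall_inP; apply.
Qed.

Hypothesis hnd : nondegenerate_qf q.

(* Evaluate [\sum_x \sum_(b in B) expi (bq x b)] in both orders; the inner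
   sum over [x] vanishes unless [b = 0] by nondegeneracy.  The complex
   numbers over any real field would do; we take the standard reals. *)
Lemma card_mul_annih {B} : is_subgroup B -> (#|B| * #|annih q B|)%N = #|G|.
Proof.
move=> sgB; pose e := expi Rdefinitions.R.
pose T := \sum_(x : G) \sum_(b in B) e (bq q x b).
have T_annih : T = (#|B| * #|annih q B|)%:R.
  rewrite /T (eq_bigr (fun x => if x \in annih q B then #|B|%:R else 0)).
    by rewrite -big_mkcond sumr_const -mulrnA natrM mulr_natl.
  by move=> x _; rewrite sum_expi_subgroup // ?inE // => a b _ _; apply: bqDr.
have T_G : T = #|G|%:R.
  rewrite /T exchange_big (eq_bigr (fun b => if b == 0 then #|G|%:R else 0)).
    by rewrite (bigD1 0) ?subgroup0 //= eqxx big1 ?addr0 // => b /andP [_ /negbTE ->].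
  move=> b bB; rewrite (eq_bigl (mem [set: G])) => [|x]; last by rewrite /= finset.in_setT.
  rewrite sum_expi_subgroup ?subgroupT //; last by move=> x y _ _; apply: bqDl.
  have -> : [forall h in [set: G], zeroQZ (bq q h b)] = (b \in annih q [set: G]).
    by rewrite inE; apply: eq_forallb => h; rewrite bqC.
  by rewrite hnd inE cardsT.
by apply/eqP; move: T_G; rewrite T_annih => /eqP; rewrite eqr_nat.
Qed.

Lemma annihK A : is_subgroup A -> annih q (annih q A) = A.
Proof.
move=> sgA; apply/esym/eqP; rewrite eqEcard sub_annihK /=.
have := card_mul_annih (annih_subgroup A); rewrite -(card_mul_annih sgA) mulnC.
by move/eqP; rewrite eqn_pmul2r ?subgroup_card_gt0 ?annih_subgroup // => /eqP ->.
Qed.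

Lemma annih_in_annih A : is_subgroup A -> annih_in q (annih q A) = annih_in q A.
Proof. by move=> sgA; rewrite /annih_in annihK // finset.setIC. Qed.

Lemma annih_inT : annih_in q [set: G] = [set 0].
Proof. by rewrite /annih_in hnd finset.setTI. Qed.

End Annihilator.

Lemma inv_sqrt_split (R : rcfType) (a b : R) : 0 < a -> 0 < b ->
  (Num.sqrt a)^-1 = (Num.sqrt (a * b))^-1 * (Num.sqrt b)^-1 * b.
Proof.
move=> a_gt0 b_gt0; rewrite sqrtrM ?ltW // -{3}(sqr_sqrtr (ltW b_gt0)).
by field; rewrite !gt_eqF ?sqrtr_gt0.
Qed.

Section GaussSum.
Variables (R : realType) (G : finZmodType) (q : G -> rat).
Hypotheses (hq : quadratic_fun q) (hnd : nondegenerate_qf q).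
Local Notation e := (expi R).

Lemma sum_expi_mul_conj_annih A : is_subgroup A ->
  (\sum_(x in [set: G]) e (q x)) * Num.conj (\sum_(y in annih q A) e (q y)) =
  #|annih q A|%:R * \sum_(x in A) e (q x).
Proof.
move=> sgA; set P := annih q A; have sgP : is_subgroup P by apply: annih_subgroup.
rewrite rmorph_sum /= mulr_sumr.
transitivity (\sum_(y in P) \sum_(z : G) e (q z) * e (bq q z y)).
  apply: eq_bigr => y _; rewrite conj_expi mulr_suml.
  rewrite (eq_bigl xpredT) => [|x]; last by rewrite /= finset.in_setT.
  rewrite (reindex_inj (addIr y)); apply: eq_bigr => z _.
  by rewrite -!expiD /bq; congr e; ring.
rewrite exchange_big /= [RHS]mulr_sumr [RHS]big_mkcond; apply: eq_bigr => z _.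
rewrite -mulr_sumr sum_expi_subgroup // => [|y1 y2 _ _]; last exact: bqDr.
have -> : (z \in A) = (z \in annih q P) by rewrite annihK.
by rewrite inE; case: ifP; rewrite ?mulr0 // mulrC.
Qed.
End GaussSum.

Theorem lemma1p2 (R : realType) (G : finZmodType) (q : G -> rat)
  (hq : quadratic_fun q) (hnd : nondegenerate_qf q)
  (A : {set G}) (hA : is_subgroup A) :
  gauss R q A = gauss R q [set: G] * Num.conj (gauss R q (annih q A)).
Proof.
have key := sum_expi_mul_conj_annih R hq hnd hA.
set P := annih q A in key *.
have sgP : is_subgroup P := annih_subgroup hq A.
have card_G : #|G| = (#|A| * #|P|)%N by rewrite card_mul_annih.
rewrite /gauss annih_in_annih // (annih_inT hnd) finset.cards1 sqrtr1 invr1 mulr1.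
rewrite cardsT card_G natrM (@inv_sqrt_split _ #|A|%:R #|P|%:R) ?ltr0n ?subgroup_card_gt0 //.
rewrite !rmorphM /= !conj_real_complex rmorph_nat.
rewrite -!mulrA; congr (_ * _); rewrite [RHS]mulrCA; congr (_ * _).
by rewrite mulrCA [RHS]mulrCA key.
Qed.
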